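(* Let $G=(V,E)$ be the bipartite graph with $V=\{v_1,\dots,v_{10}\}$ and the 14 edges $\{v_1,v_6\},\{v_1,v_7\},\{v_2,v_6\},\{v_2,v_7\},\{v_2,v_8\},\{v_3,v_7\},\{v_3,v_9\},\{v_3,v_{10}\},\{v_4,v_8\},\{v_4,v_9\},\{v_4,v_{10}\},\{v_5,v_8\},\{v_5,v_9\},\{v_5,v_{10}\}$, and let $R=\{\{v_2,v_7\},\{v_4,v_9\},\{v_5,v_{10}\}\}$. Let $y\in\mathbb{R}^E$ be given by $y_{\{v_1,v_6\}}=\frac23$ and $y_e=\frac13$ for all other $e\in E$. Then $y$ is not a convex combination of incidence vectors of perfect matchings $M$ of $G$ with $|M\cap R|$ odd, i.e., $y\notin P_{(G,R)}$.
   Context: $P_{(G,R)}=\operatorname{conv}\{\chi^M\colon M \text{ a perfect matching of } G,\ |M\cap R| \text{ odd}\}$. *)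

From HB Require Import structures.
From mathcomp Require Import all_boot all_order all_algebra.
Set Implicit Arguments. Unset Strict Implicit. Unset Printing Implicit Defensive.
Import Order.TTheory GRing.Theory Num.Theory.
Local Open Scope ring_scope.

(* Vertices v_1..v_10 are represented by i : 'I_10 with label i.+1.
   Edges are indexed by 'I_14, in the order listed in the paper; each edge is
   given by the (1-based) labels of its two endpoints. *)
Definition edge_list : seq (nat * nat) :=
  [:: (1,6); (1,7); (2,6); (2,7); (2,8); (3,7); (3,9); (3,10);
      (4,8); (4,9); (4,10); (5,8); (5,9); (5,10)]%N.

Definition ends (e : 'I_14) : nat * nat := nth (0,0)%N edge_list e.

Definition incident (v : 'I_10) (e : 'I_14) : bool :=
  (v.+1 == (ends e).1) || (v.+1 == (ends e).2).

Definition perfect_matching (M : {set 'I_14}) : bool :=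
  [forall v : 'I_10, #|[set e in M | incident v e]| == 1%N].

Definition Rset : {set 'I_14} :=
  [set e : 'I_14 | ends e \in [:: (2,7); (4,9); (5,10)]%N].

Definition odd_pm (M : {set 'I_14}) : bool :=
  perfect_matching M && odd #|M :&: Rset|.

Definition chi (R : pzRingType) (M : {set 'I_14}) : 'I_14 -> R :=
  fun e => (e \in M)%:R.

Definition in_conv_hull (R : realFieldType) (T : finType) (n : nat)
    (S : pred T) (f : T -> 'I_n -> R) (y : 'I_n -> R) : Prop :=
  exists lam : T -> R,
    [/\ forall t, 0 <= lam t,
        forall t, ~~ S t -> lam t = 0,
        \sum_t lam t = 1
      & forall e, y e = \sum_t lam t * f t e].

Definition in_PGR (R : realFieldType) (y : 'I_14 -> R) : Prop :=
  in_conv_hull odd_pm (@chi R) y.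

Definition yvec (R : realFieldType) : 'I_14 -> R :=
  fun e => if val e == 0%N then 2 / 3 else 1 / 3.

From mathcomp Require Import all_boot all_order all_algebra zify.

(* Every perfect matching M of G with |M ∩ R| odd avoids the edge {v2,v8}:
   if {v2,v8} ∈ M, the degree-2 vertex v6 forces {v1,v6} ∈ M, then v7 forces
   {v3,v7} ∈ M, and v4, v5 must be matched to v9, v10, using either both or
   neither of {v4,v9}, {v5,v10}; as {v2,v7} ∉ M, |M ∩ R| would be even.
   Hence every point of P_(G,R) vanishes on {v2,v8}, whereas y gives it 1/3. *)

Set Implicit Arguments.
Unset Strict Implicit.
Unset Printing Implicit Defensive.
Import GRing.Theory Num.Theory.
Local Open Scope ring_scope.

Lemma in_conv_hull_coord_eq0 (R : realFieldType) (T : finType) (n : nat)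
    (S : pred T) (f : T -> 'I_n -> R) (y : 'I_n -> R) (i : 'I_n) :
  (forall t, S t -> f t i = 0) -> in_conv_hull S f y -> y i = 0.
Proof.
move=> f_i0 [lam [_ lamS0 _ ->]]; apply: big1 => t _.
by have [/f_i0 ->|/lamS0 ->] := boolP (S t); rewrite ?mulr0 ?mul0r.
Qed.

Lemma card_sep_sum (T : finType) (A : {pred T}) (P : pred T) :
  #|[set x in A | P x]| = (\sum_(x | P x) (x \in A))%N.
Proof.
rewrite -sum1dep_card (eq_bigl _ _ (fun x => andbC _ _)) big_mkcondr /=.
by apply: eq_bigr => x _; case: (x \in A).
Qed.

Lemma big_mknat_cond (R : Type) (idx : R) (op : Monoid.law idx) (n : nat)
    (P : pred 'I_n.+1) (F : 'I_n.+1 -> R) :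
  \big[op/idx]_(i < n.+1 | P i) F i
  = \big[op/idx]_(0 <= i < n.+1) (if P (inord i) then F (inord i) else idx).
Proof. by rewrite big_mknat big_mkcond. Qed.

Definition e_v2v8 : 'I_14 := inord 4.

Lemma degree_one_odd_R_edge_v2v8_eq0 (x : 'I_14 -> nat) :
  (forall v, \sum_(e | incident v e) x e = 1)%N ->
  odd (\sum_(e in Rset) x e)%N -> x e_v2v8 = 0%N.
Proof.
rewrite /e_v2v8 => deg1.
move: (deg1 (inord 0)) (deg1 (inord 1)) (deg1 (inord 2)) (deg1 (inord 3))
      (deg1 (inord 4)) (deg1 (inord 5)) (deg1 (inord 6)) (deg1 (inord 7))
      (deg1 (inord 8)) (deg1 (inord 9)).
rewrite !big_mknat_cond /index_iota /= !big_cons !big_nil.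
rewrite /incident !inE /ends !inordK //=.
lia.
Qed.

Lemma perfect_matching_degree (M : {set 'I_14}) :
  perfect_matching M -> forall v, (\sum_(e | incident v e) (e \in M) = 1)%N.
Proof. by move=> /forallP pmM v; have /eqP := pmM v; rewrite card_sep_sum. Qed.

Lemma odd_pm_notin_v2v8 (M : {set 'I_14}) : odd_pm M -> e_v2v8 \notin M.
Proof.
case/andP=> pmM; rewrite card_sep_sum => oddMR.
have := degree_one_odd_R_edge_v2v8_eq0 (perfect_matching_degree pmM) oddMR.
by case: (e_v2v8 \in M).
Qed.

Theorem lemma18 (R : realFieldType) : ~ in_PGR (yvec R).
Proof.
move=> /(in_conv_hull_coord_eq0 (i := e_v2v8)) yv2v8.
have /yv2v8 : forall M, odd_pm M -> chi R M e_v2v8 = 0.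
  by move=> M /odd_pm_notin_v2v8 /negbTE; rewrite /chi => ->.
have val_v2v8 : val e_v2v8 = 4%N by exact: inordK.
by rewrite /yvec val_v2v8 mul1r => /eqP; rewrite invr_eq0 pnatr_eq0.
Qed.
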